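(* Let $S$ be a numerical semigroup with multiplicity $e$ and blowup $B$. If ${\rm adj}(S)=\operatorname{Ap}(B;e)$, then ${\rm d}_{\max}(S)=\max\{d(f;B^{\mathcal D}): f\in\operatorname{maxAp}(B;e)\}$.
   Context: $S$ is a numerical semigroup (a submonoid of $\mathbb N$ with finite complement) with minimal generators $e<a_1<\dots<a_t$. An $S$-factorization of $n$ is $(c_0,\dots,c_t)\in\mathbb N^{t+1}$ with $c_0e+\sum c_ia_i=n$, of length $\sum c_i$. ${\rm ord}(n;S)$ is the maximal such length, ${\rm d}_{\max}(n;S)$ is the number of factorizations of maximal length, and ${\rm d}_{\max}(S)=\max_{n\in S}{\rm d}_{\max}(n;S)$. ${\rm adj}(S)=\{s-{\rm ord}(s;S)e:s\in S\}$. The blowup is $B=\langle e,d_1,\dots,d_t\rangle$ with $d_i=a_i-e$, and $\mathcal D=(e,d_1,\dots,d_t)$. $d(b;B^{\mathcal D})$ is the number of tuples $(x_0,\dots,x_t)\in\mathbb N^{t+1}$ with $x_0e+\sum x_id_i=b$. $\operatorname{Ap}(B;e)=\{w\in B:w-e\notin B\}$, and $\operatorname{maxAp}(B;e)$ is the set of elements of $\operatorname{Ap}(B;e)\setminus\{0\}$ that are maximal with respect to the partial order $w\preceq w'$ iff $w'-w\in B$. *)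

From mathcomp Require Import all_boot.
Set Implicit Arguments. Unset Strict Implicit. Unset Printing Implicit Defensive.

Definition in_sg (g : seq nat) (n : nat) : Prop :=
  exists c : 'I_(size g) -> nat, \sum_(i < size g) c i * nth 0 g i = n.

(* All g-factorizations (c_0,...,c_{k-1}) of n.  Since every g_i >= 1
   (guaranteed by the hypotheses below), each c_i <= n, so entries are
   taken in 'I_n.+1 without loss. *)
Definition facts (g : seq nat) (n : nat) : {set {ffun 'I_(size g) -> 'I_n.+1}} :=
  [set c : {ffun 'I_(size g) -> 'I_n.+1} | \sum_(i < size g) (c i : nat) * nth 0 g i == n].

Definition flen (k n : nat) (c : {ffun 'I_k -> 'I_n.+1}) : nat :=
  \sum_(i < k) (c i : nat).

Definition ord (g : seq nat) (n : nat) : nat :=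
  \max_(c in facts g n) flen c.

Definition dmax_at (g : seq nat) (n : nat) : nat :=
  #|[set c in facts g n | flen c == ord g n]|.

Definition dcount (g : seq nat) (b : nat) : nat := #|facts g b|.

Definition remove_at (i : nat) (g : seq nat) : seq nat := take i g ++ drop i.+1 g.

Definition numsg_min_gens (g : seq nat) : Prop :=
  [/\ g <> [::],
      0 < head 0 g,
      sorted ltn g,
      (exists N, forall n, N <= n -> in_sg g n)
    & forall i, i < size g -> ~ in_sg (remove_at i g) (nth 0 g i) ].

Definition mult (g : seq nat) : nat := head 0 g.

Definition blowup (g : seq nat) : seq nat :=
  mult g :: [seq a - mult g | a <- behead g].

Definition adj (g : seq nat) (x : nat) : Prop :=
  exists s, in_sg g s /\ x = s - ord g s * mult g.

(* Ap(B; e) = { w in B : w - e notin B } (w - e < 0 counts as not in B) *)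
Definition Ap (B : seq nat) (e w : nat) : Prop :=
  in_sg B w /\ ~ (e <= w /\ in_sg B (w - e)).

Definition preceq (B : seq nat) (w w' : nat) : Prop :=
  w <= w' /\ in_sg B (w' - w).

Definition maxAp (B : seq nat) (e w : nat) : Prop :=
  [/\ Ap B e w, w <> 0 &
      forall w', Ap B e w' -> w' <> 0 -> preceq B w w' -> w' = w].

Definition is_max (P : nat -> Prop) (m : nat) : Prop :=
  P m /\ forall k, P k -> k <= m.

From mathcomp Require Import all_boot zify boolp.
Set Implicit Arguments. Unset Strict Implicit. Unset Printing Implicit Defensive.

(* Let [L = ord(n;S)]. Dropping the coefficient of [e] from a factorization of
   [n] of length [L] leaves a factorization of [n - L e] over the blowup [B],
   so [d_max(n;S) <= d(n - L e; B)].  Since [n - L e] lies in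
   [adj(S) = Ap(B;e)], it lies [<=_B]-below some [f] in [maxAp(B;e)], and
   [d(_; B)] is monotone for [<=_B].  Conversely every [f] in [Ap(B;e)] is
   [s - ord(s;S) e]; for [n = s + f e] one gets [ord(n;S) = ord(s;S) + f],
   since a larger value would put [f - e] in [B], and then every factorization
   of [f] over [B] lifts to a factorization of [n] of maximal length. *)

Lemma leq_card_in_map (T U : finType) (A : {set T}) (B : {set U}) (f : T -> U) :
  {in A &, injective f} -> {in A, forall x, f x \in B} -> #|A| <= #|B|.
Proof.
move=> f_inj fAB; rewrite -(card_in_imset f_inj); apply: subset_leq_card.
by apply/subsetP => _ /imsetP[x xA ->]; exact: fAB.
Qed.

Lemma bounded_argmax (P : nat -> Prop) (h : nat -> nat) (K : nat) :
  (forall n, P n -> n < K) -> (exists n, P n) ->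
  exists2 m, P m & forall n, P n -> h n <= h m.
Proof.
move=> ltK [n Pn].
have [i /asboolP Pi i_max] :=
  @arg_maxnP _ (Ordinal (ltK n Pn)) [pred i : 'I_K | `[< P i >]] (h \o val) (asboolT Pn).
by exists i => // m Pm; exact: (i_max (Ordinal (ltK m Pm)) (asboolT Pm)).
Qed.

Section Factorizations.
Variable g : seq nat.

Lemma in_sg0 : in_sg g 0.
Proof. by exists (fun=> 0); rewrite big1. Qed.

Lemma in_sg_add m n : in_sg g m -> in_sg g n -> in_sg g (m + n).
Proof.
move=> [c <-] [c' <-]; exists (fun i => c i + c' i).
by rewrite -big_split; apply: eq_bigr => i _; rewrite mulnDl.
Qed.

Lemma preceq_trans u v w : preceq g u v -> preceq g v w -> preceq g u w.
Proof.
move=> [le_uv Buv] [le_vw Bvw]; split; first exact: leq_trans le_uv le_vw.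
have -> : w - u = (w - v) + (v - u) by lia.
exact: in_sg_add.
Qed.

Lemma leq_flen_ord n c : c \in facts g n -> flen c <= ord g n.
Proof. by move=> cF; rewrite /ord; apply: leq_bigmax_cond. Qed.

Lemma ord_attained n c : c \in facts g n -> exists2 c', c' \in facts g n & flen c' = ord g n.
Proof.
move=> cF; have [|c' c'F c'E] := eq_bigmax_cond (@flen _ n) (A := mem (facts g n)).
  by apply/card_gt0P; exists c.
by exists c'.
Qed.

Hypothesis g_pos : forall i, i < size g -> 0 < nth 0 g i.

Lemma in_sg_facts n : in_sg g n -> exists c, c \in facts g n.
Proof.
move=> [c cE]; have le_n i : c i <= n.
  rewrite -cE (bigD1 i) //= (leq_trans _ (leq_addr _ _)) // leq_pmulr //.
  exact: g_pos.
exists [ffun i => inord (c i)]; rewrite inE; apply/eqP; rewrite -[RHS]cE.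
by apply: eq_bigr => i _; rewrite ffunE inordK // ltnS.
Qed.

(* Adding a fixed factorization of [w' - w] embeds the factorizations of [w]
   into those of [w']. *)
Lemma leq_dcount w w' : preceq g w w' -> dcount g w <= dcount g w'.
Proof.
move=> [le_ww' /in_sg_facts[y yF]].
have lt_w' (x : {ffun 'I_(size g) -> 'I_w.+1}) i : x i + y i < w'.+1.
  by have := ltn_ord (x i); have := ltn_ord (y i); lia.
apply: (@leq_card_in_map _ _ _ _
  (fun x : {ffun 'I_(size g) -> 'I_w.+1} => [ffun i => inord (x i + y i) : 'I_w'.+1])).
- move=> x x' _ _ /ffunP xx'; apply/ffunP => i; apply: val_inj.
  by have := congr1 val (xx' i); rewrite !ffunE /= !inordK ?lt_w' //; apply: addIn.
- move=> x; rewrite !inE in yF * => /eqP xE.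
  rewrite (eq_bigr (fun i => x i * nth 0 g i + y i * nth 0 g i)).
    by rewrite big_split /= xE (eqP yF) subnKC.
  by move=> i _; rewrite ffunE inordK ?lt_w' // mulnDl.
Qed.

End Factorizations.

Definition sum_upto (m : nat) (h : nat -> nat) : nat := \sum_(0 <= j < m) h j.

Definition wsum (w : seq nat) (h : nat -> nat) : nat :=
  sum_upto (size w) (fun j => h j * nth 0 w j).

Lemma eq_sum_upto m h h' : (forall j, j < m -> h j = h' j) -> sum_upto m h = sum_upto m h'.
Proof. by move=> hh'; apply: eq_big_nat => j /andP[_ /hh']. Qed.

Lemma eq_wsum w h h' : (forall j, j < size w -> h j = h' j) -> wsum w h = wsum w h'.
Proof. by move=> hh'; apply: eq_sum_upto => j /hh' ->. Qed.

Section PositiveWeights.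
Variable w : seq nat.
Hypothesis w_pos : forall j, j < size w -> 0 < nth 0 w j.

Lemma leq_coef_wsum h j : j < size w -> h j <= wsum w h.
Proof.
move=> lt_j; rewrite /wsum /sum_upto big_mkord (bigD1 (Ordinal lt_j)) //=.
by rewrite (leq_trans _ (leq_addr _ _)) // leq_pmulr // w_pos.
Qed.

Lemma leq_sum_upto_wsum h : sum_upto (size w) h <= wsum w h.
Proof.
rewrite /wsum /sum_upto big_nat_cond [leqRHS]big_nat_cond.
by apply: leq_sum => j /andP[/andP[_ lt_j] _]; rewrite leq_pmulr // w_pos.
Qed.

End PositiveWeights.

(* A factorization over [e :: w] is split into its coefficient of [e] and
   its tail [ctail c], a function on [nat] so that tails over generating
   sequences of equal length but different types can be compared. *)
Section ConsCoordinates.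
Variables k p : nat.
Implicit Types (c : {ffun 'I_k.+1 -> 'I_p.+1}) (h : nat -> nat).

Definition ctail c (j : nat) : nat := c (inord j.+1).

Definition ccons (x0 : nat) h : {ffun 'I_k.+1 -> 'I_p.+1} :=
  [ffun i : 'I_k.+1 => inord (if nat_of_ord i is j.+1 then h j else x0)].

Lemma big_ord_cons (F : 'I_k.+1 -> nat) (u : nat -> nat) :
  \sum_(i < k.+1) F i * u i = F ord0 * u 0 + \sum_(0 <= j < k) F (inord j.+1) * u j.+1.
Proof.
rewrite big_ord_recl big_mkord; congr (_ + _); apply: eq_bigr => i _.
have -> : lift ord0 i = inord i.+1 by apply: val_inj; rewrite /= inordK // ltnS.
by rewrite inordK // ltnS.
Qed.

Lemma flen_cons c : flen c = c ord0 + sum_upto k (ctail c).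
Proof.
rewrite /flen /sum_upto big_ord_recl big_mkord; congr (_ + _); apply: eq_bigr => i _.
by rewrite /ctail; congr (nat_of_ord (c _)); apply: val_inj; rewrite /= inordK // ltnS.
Qed.

Lemma ctail_le c j : ctail c j <= p.
Proof. by rewrite -ltnS ltn_ord. Qed.

Lemma ccons_head x0 h : x0 <= p -> ccons x0 h ord0 = x0 :> nat.
Proof. by move=> le_x0; rewrite ffunE inordK. Qed.

Lemma ctail_ccons x0 h j : j < k -> h j <= p -> ctail (ccons x0 h) j = h j.
Proof. by move=> lt_j le_hj; rewrite /ctail ffunE (@inordK k j.+1) // inordK. Qed.

Lemma ctail_inj c c' :
  c ord0 = c' ord0 :> nat -> (forall j, j < k -> ctail c j = ctail c' j) -> c = c'.
Proof.
move=> cc'0 cc'; apply/ffunP => -[[|j] lt_j]; apply: val_inj.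
  by have -> : Ordinal lt_j = ord0 by apply: val_inj.
have -> : Ordinal lt_j = inord j.+1 by apply: val_inj; rewrite /= inordK.
exact: cc'.
Qed.

End ConsCoordinates.

Lemma facts_cons e w n (c : {ffun 'I_(size w).+1 -> 'I_n.+1}) :
  (c \in facts (e :: w) n) = (c ord0 * e + wsum w (ctail c) == n).
Proof. by rewrite inE (big_ord_cons (fun i => nat_of_ord (c i)) (nth 0 (e :: w))). Qed.

Lemma in_sg_cons e w n : in_sg (e :: w) n <-> exists x0 h, x0 * e + wsum w h = n.
Proof.
split=> [[c]|[x0 [h <-]]].
  by rewrite (big_ord_cons c (nth 0 (e :: w))) => <-; exists (c ord0), (fun j => c (inord j.+1)).
exists (fun i : 'I_(size w).+1 => if nat_of_ord i is j.+1 then h j else x0).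
rewrite (big_ord_cons _ (nth 0 (e :: w))); congr (_ + _).
by apply: eq_big_nat => j /andP[_ lt_j]; rewrite inordK.
Qed.

Lemma in_sg_cons_mul e w m : in_sg (e :: w) (m * e).
Proof.
apply/in_sg_cons; exists m, (fun _ => 0).
by rewrite /wsum /sum_upto big1 ?addn0.
Qed.

Section MaximalApery.
Variables (B : seq nat) (e K : nat).
Hypothesis Ap_lt : forall w, Ap B e w -> w < K.

Lemma maxAp_above_nonzero w0 : Ap B e w0 -> w0 <> 0 -> exists2 f, maxAp B e f & preceq B w0 f.
Proof.
move=> Aw0 nz0; have w0w0 : preceq B w0 w0 by split=> //; rewrite subnn; exact: in_sg0.
have [f [Af [nzf w0f]] f_max] := @bounded_argmax
  (fun w => Ap B e w /\ w <> 0 /\ preceq B w0 w) id K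
  (fun w Pw => Ap_lt (proj1 Pw)) (ex_intro _ w0 (conj Aw0 (conj nz0 w0w0))).
exists f => //; split=> // w' Aw' nzw' fw'.
apply/eqP; rewrite eqn_leq (proj1 fw') andbT.
by apply: f_max; split=> //; split=> //; exact: preceq_trans w0f fw'.
Qed.

Lemma maxAp_above w0 :
  (exists2 w, Ap B e w & w <> 0) -> Ap B e w0 -> exists2 f, maxAp B e f & preceq B w0 f.
Proof.
move=> [w Aw nzw] Aw0; have [-> | nz0] := eqVneq w0 0; last first.
  exact: maxAp_above_nonzero (elimN eqP nz0).
have [f Mf _] := maxAp_above_nonzero Aw nzw.
by exists f => //; split; rewrite ?subn0; case: Mf => -[].
Qed.

End MaximalApery.

Section Blowup.
Variables (e : nat) (gs : seq nat).
Hypothesis e_gt0 : 0 < e.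
Hypothesis e_lt_gens : forall j, j < size gs -> e < nth 0 gs j.

Local Notation S := (e :: gs).
Local Notation dgs := [seq a - e | a <- gs].
Local Notation B := (e :: dgs).

Lemma dgs_pos j : j < size dgs -> 0 < nth 0 dgs j.
Proof. by rewrite size_map => lt_j; rewrite (nth_map 0) // subn_gt0 e_lt_gens. Qed.

Lemma S_pos i : i < size S -> 0 < nth 0 S i.
Proof. by case: i => [|j] //= /e_lt_gens; apply: leq_trans. Qed.

Lemma B_pos i : i < size B -> 0 < nth 0 B i.
Proof. by case: i => [|j] //=; apply: dgs_pos. Qed.

Lemma wsum_blowup h : wsum gs h = wsum dgs h + sum_upto (size gs) h * e.
Proof.
rewrite /wsum /sum_upto size_map big_distrl -big_split /=.
apply: eq_big_nat => j /andP[_ lt_j].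
by rewrite (nth_map 0) // -mulnDr subnK // ltnW // e_lt_gens.
Qed.

Lemma facts_blowup n (c : {ffun 'I_(size gs).+1 -> 'I_n.+1}) :
  c \in facts S n -> flen c * e + wsum dgs (ctail c) = n.
Proof. by rewrite facts_cons flen_cons wsum_blowup mulnDl => /eqP; lia. Qed.

Lemma in_sg_blowup n : in_sg S n -> in_sg B n.
Proof.
move=> /in_sg_cons[x0 [h <-]]; apply/in_sg_cons.
by exists (x0 + sum_upto (size gs) h), h; rewrite wsum_blowup mulnDl; lia.
Qed.

Lemma Ap_blowup_add_mul r m : Ap B e (r + m * e) -> in_sg B r -> m = 0.
Proof.
case: m => [//|m] [_ notB] Br; exfalso; apply: notB; rewrite mulSn; split; first lia.
have -> : r + (e + m * e) - e = r + m * e by lia.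
exact/in_sg_add/in_sg_cons_mul.
Qed.

Lemma ord_mul_leq n : in_sg S n -> ord S n * e <= n.
Proof.
move=> /(in_sg_facts S_pos)[c /ord_attained[c' c'F <-]].
by rewrite -[leqRHS](facts_blowup c'F) leq_addr.
Qed.

Lemma ord_addn_mul n m : in_sg S n -> ord S n + m <= ord S (n + m * e).
Proof.
move=> /(in_sg_facts S_pos)[c /ord_attained[c' c'F <-]].
have le_m : m <= m * e by rewrite leq_pmulr.
have le_c'0 : c' ord0 + m <= n + m * e by have := ctail_le c' 0; have := ltn_ord (c' ord0); lia.
set c'' := ccons (size gs) (n + m * e) (c' ord0 + m) (ctail c').
have c''_tail : forall j, j < size gs -> ctail c'' j = ctail c' j.
  by move=> j lt_j; rewrite ctail_ccons // (leq_trans (ctail_le _ _)) ?leq_addr.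
have c''F : c'' \in facts S (n + m * e).
  move: c'F; rewrite !facts_cons ccons_head // (eq_wsum c''_tail) mulnDl.
  by move=> /eqP c'E; rewrite -[n in _ == n + _]c'E addnAC.
apply: leq_trans (leq_flen_ord c''F).
by rewrite !flen_cons ccons_head // (eq_sum_upto c''_tail) addnAC.
Qed.

Lemma dmax_at_le_dcount n : dmax_at S n <= dcount B (n - ord S n * e).
Proof.
set L := ord S n; set r := n - L * e.
have tail_fact (c : {ffun 'I_(size gs).+1 -> 'I_n.+1}) :
    c \in [set c in facts S n | flen c == L] ->
    [/\ c ord0 + sum_upto (size gs) (ctail c) = L :> nat, wsum dgs (ctail c) = r
      & forall j, j < size gs -> ctail c j <= r].
  move=> /setIdP[/facts_blowup cE /eqP cL]; rewrite -flen_cons.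
  have wr : wsum dgs (ctail c) = r by rewrite /r -cL -[n in n - _]cE addKn.
  by split=> // j lt_j; rewrite -wr (leq_coef_wsum dgs_pos) // size_map.
apply: (@leq_card_in_map _ _ _ _ (fun c => ccons (size dgs) r 0 (ctail c))).
- move=> c c' /tail_fact[cL _ c_le] /tail_fact[c'L _ c'_le] cc'.
  have tails j : j < size gs -> ctail c j = ctail c' j.
    move=> lt_j; have := congr1 (fun x => ctail x j) cc'.
    by rewrite !ctail_ccons ?size_map ?c_le ?c'_le.
  rewrite (eq_sum_upto tails) in cL.
  apply: ctail_inj tails; apply/eqP.
  by rewrite -(eqn_add2r (sum_upto (size gs) (ctail c'))) cL c'L.
- move=> c /tail_fact[_ wr c_le]; rewrite facts_cons ccons_head // mul0n add0n.
  apply/eqP; rewrite -[RHS]wr; apply: eq_wsum => j; rewrite size_map => lt_j.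
  by rewrite ctail_ccons ?size_map ?c_le.
Qed.

(* Conversely, a factorization [x] of [r = n - L e] over [B] yields one of
   [n] over [S] of length [L + x_0]; maximality of [L] forces [x_0 = 0]. *)
Lemma dcount_le_dmax_at n :
  in_sg S n -> n - ord S n * e <= ord S n -> dcount B (n - ord S n * e) <= dmax_at S n.
Proof.
move=> Sn; set L := ord S n; set r := n - L * e => le_rL.
have le_Le : L * e <= n := ord_mul_leq Sn.
pose lift (x : {ffun 'I_(size dgs).+1 -> 'I_r.+1}) :=
  ccons (size gs) n (L + x ord0 - sum_upto (size gs) (ctail x)) (ctail x).
have lift_fact (x : {ffun 'I_(size dgs).+1 -> 'I_r.+1}) : x \in facts B r ->
    [/\ x ord0 = 0 :> nat, lift x \in [set c in facts S n | flen c == L]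
      & forall j, j < size gs -> ctail (lift x) j = ctail x j].
  rewrite facts_cons => /eqP xE.
  have tails j : j < size gs -> ctail (lift x) j = ctail x j.
    by move=> ?; rewrite ctail_ccons // (leq_trans (ctail_le _ _)) ?leq_subr.
  have le_TW := leq_sum_upto_wsum dgs_pos (ctail x).
  rewrite [X in sum_upto X]size_map in le_TW.
  have le_T : sum_upto (size gs) (ctail x) * e <= L * e by rewrite leq_mul2r; lia.
  have le_Lx0 : (L + x ord0) * e <= n by rewrite mulnDl; lia.
  have le_lift0 : L + x ord0 - sum_upto (size gs) (ctail x) <= n.
    by rewrite (leq_trans (leq_subr _ _)) // (leq_trans (leq_pmulr _ e_gt0)).
  have liftF : lift x \in facts S n.
    rewrite facts_cons ccons_head // (eq_wsum tails) wsum_blowup mulnBl mulnDl.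
    by apply/eqP; lia.
  have lift_len : flen (lift x) = L + x ord0.
    by rewrite flen_cons ccons_head // (eq_sum_upto tails); lia.
  have x0 : x ord0 = 0 :> nat by have := leq_flen_ord liftF; rewrite lift_len; lia.
  by split=> //; rewrite inE liftF lift_len x0 addn0 /=.
apply: (@leq_card_in_map _ _ _ _ lift).
- move=> x x' /lift_fact[x0 _ xt] /lift_fact[x'0 _ x't] xx'.
  apply: ctail_inj; first by rewrite x0 x'0.
  by move=> j; rewrite [X in j < X]size_map => lt_j; rewrite -xt // -x't // xx'.
- by move=> x /lift_fact[].
Qed.

Lemma Ap_blowup_lt N w : (forall n, N <= n -> in_sg S n) -> Ap B e w -> w < N + e.
Proof.
move=> SN [_ notB]; rewrite ltnNge; apply/negP => le_w; apply: notB.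
by split; [lia | apply/in_sg_blowup/SN; lia].
Qed.

(* The least element of [B] congruent to [1] modulo [e] lies in [Ap(B; e)]. *)
Lemma exists_Ap_blowup_nonzero N :
  1 < e -> (forall n, N <= n -> in_sg S n) -> exists2 w, Ap B e w & w <> 0.
Proof.
move=> e_gt1 SN; set W := N * e + 1.
have PW : in_sg B W /\ W %% e = 1.
  split; last by rewrite modnMDl modn_small.
  by apply/in_sg_blowup/SN; rewrite (leq_trans (leq_pmulr N e_gt0)) ?leq_addr.
have [w /asboolP[Bw w1] w_min] := @arg_minnP _ (@Ordinal W.+1 W (leqnn _))
  [pred w : 'I_W.+1 | `[< in_sg B w /\ w %% e = 1 >]] val (asboolT PW).
exists w; last by move=> w0; rewrite w0 mod0n in w1.
split=> // -[le_ew Bwe].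
have lt_w : w - e < W.+1 by rewrite (leq_ltn_trans (leq_subr e w)).
rewrite -(subnK le_ew) modnDr in w1.
by have := w_min (Ordinal lt_w) (asboolT (conj Bwe w1)); rewrite /=; lia.
Qed.

Lemma Ap_blowup_dcount_le_dmax_at f :
  (forall x, adj S x <-> Ap B e x) -> Ap B e f -> exists2 n, in_sg S n & dcount B f <= dmax_at S n.
Proof.
move=> adjE Af; have [s [Ss fE]] := (adjE f).2 Af; rewrite /mult /= in fE.
have [n nE] : exists n, n = s + f * e by eexists.
have Sn : in_sg S n by rewrite nE; exact/in_sg_add/in_sg_cons_mul.
have le_ord : ord S s + f <= ord S n by rewrite nE; exact: ord_addn_mul.
set D := ord S n - (ord S s + f).
have ordE : ord S n * e = ord S s * e + f * e + D * e.
  by rewrite -!mulnDl /D; congr (_ * _); lia.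
have le_n := ord_mul_leq Sn; have le_s := ord_mul_leq Ss.
have rE : f = (n - ord S n * e) + D * e by lia.
have Ar : Ap B e (n - ord S n * e) by apply/adjE; exists n.
have D0 : D = 0 by apply: Ap_blowup_add_mul (proj1 Ar); rewrite -rE.
exists n => //; have rf : n - ord S n * e = f by rewrite rE D0 addn0.
by rewrite -{1}rf dcount_le_dmax_at // rf; lia.
Qed.

End Blowup.

Theorem proposition4p2 (g : seq nat) :
  numsg_min_gens g ->
  1 < mult g ->
  (forall x, adj g x <-> Ap (blowup g) (mult g) x) ->
  exists M,
    is_max (fun v => exists n, in_sg g n /\ v = dmax_at g n) M /\
    is_max (fun v => exists f, maxAp (blowup g) (mult g) f /\ v = dcount (blowup g) f) M.
Proof.
case: g => [|e gs]; first by case.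
move=> [_ /= e_gt0 g_sorted [N SN] _]; rewrite /blowup /mult /= => e_gt1 adjE.
set S := e :: gs; set B := e :: _.
have e_lt_gens j : j < size gs -> e < nth 0 gs j.
  by apply/all_nthP: j; exact: order_path_min ltn_trans g_sorted.
have Ap_lt := Ap_blowup_lt e_gt0 e_lt_gens SN.
have Ap_nz := exists_Ap_blowup_nonzero e_gt0 e_lt_gens e_gt1 SN.
have [w1 Aw1 _] := Ap_nz; have [f1 Mf1 _] := maxAp_above Ap_lt Ap_nz Aw1.
have [fs Mfs fs_max] := bounded_argmax (dcount B)
  (fun f '(And3 Af _ _) => Ap_lt f Af) (ex_intro _ f1 Mf1).
have dmax_le n : in_sg S n -> dmax_at S n <= dcount B fs.
  move=> Sn; have Ar : Ap B e (n - ord S n * e) by apply/adjE; exists n.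
  have [f Mf rf] := maxAp_above Ap_lt Ap_nz Ar.
  apply: leq_trans (dmax_at_le_dcount e_gt0 e_lt_gens n) _.
  exact: leq_trans (leq_dcount (B_pos e_gt0 e_lt_gens) rf) (fs_max f Mf).
have [Afs _ _] := Mfs.
have [n Sn dcount_le] := Ap_blowup_dcount_le_dmax_at e_gt0 e_lt_gens adjE Afs.
exists (dcount B fs); split; split.
- by exists n; split => //; apply/eqP; rewrite eqn_leq dcount_le dmax_le.
- by move=> _ [m [Sm ->]]; exact: dmax_le.
- by exists fs.
- by move=> _ [f [Mf ->]]; exact: fs_max.
Qed.
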